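(* With the notation of the context, let $u\in C^2(\Omega)$, let $w$ be a unit vector, and let $C_r,C_b$ be constants such that $d_r,d_b>0$. If $f_r(t)=f_b(t)$ for some $t\in\Omega$, then $\nu_u(t)=e$.
   Context: Let $\Omega\subset\mathbb R^2$, $e=(0,0,1)$, $n_b>n_r>1$. For $\kappa>1$ put $\Phi_\kappa(s)=s-\sqrt{\kappa^2-1+s^2}$. For $u\in C^2(\Omega)$ let $\nu_u(t)=(-\nabla u(t),1)/\sqrt{1+|\nabla u(t)|^2}$. For $c\in\{r,b\}$: $\lambda_c(t)=\Phi_{n_c}(e\cdot\nu_u(t))$, $m_c(t)=\frac1{n_c}\big(e-\lambda_c(t)\nu_u(t)\big)$ (a unit vector), $d_c(t)=\dfrac{C_c-(e-w)\cdot(t,u(t))}{n_c-w\cdot m_c(t)}$, $f_c(t)=(t,u(t))+d_c(t)m_c(t)$. *)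

From Stdlib Require Import Reals Lra.
Open Scope R_scope.

Definition R2 := (R * R)%type.
Definition R3 := (R * R * R)%type.

Definition v3 (a b c : R) : R3 := (a, b, c).
Definition x3 (v : R3) : R := fst (fst v).
Definition y3 (v : R3) : R := snd (fst v).
Definition z3 (v : R3) : R := snd v.

Definition dot3 (v w : R3) : R := x3 v * x3 w + y3 v * y3 w + z3 v * z3 w.
Definition add3 (v w : R3) : R3 := v3 (x3 v + x3 w) (y3 v + y3 w) (z3 v + z3 w).
Definition sub3 (v w : R3) : R3 := v3 (x3 v - x3 w) (y3 v - y3 w) (z3 v - z3 w).
Definition scal3 (a : R) (v : R3) : R3 := v3 (a * x3 v) (a * y3 v) (a * z3 v).

Definition e3 : R3 := v3 0 0 1.

Definition dist2 (p q : R2) : R :=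
  sqrt ((fst p - fst q) ^ 2 + (snd p - snd q) ^ 2).

Definition open2 (O : R2 -> Prop) : Prop :=
  forall p, O p -> exists r, 0 < r /\ forall q, dist2 p q < r -> O q.

Definition cont2_at (f : R2 -> R) (p : R2) : Prop :=
  forall eps, 0 < eps -> exists delta, 0 < delta /\
    forall q, dist2 p q < delta -> Rabs (f q - f p) < eps.

Definition partial1 (f : R2 -> R) (p : R2) (l : R) : Prop :=
  derivable_pt_lim (fun s => f (s, snd p)) (fst p) l.
Definition partial2 (f : R2 -> R) (p : R2) (l : R) : Prop :=
  derivable_pt_lim (fun s => f (fst p, s)) (snd p) l.

Definition C2_on (O : R2 -> Prop) (u : R2 -> R) : Prop :=
  exists u1 u2 u11 u12 u21 u22 : R2 -> R,
    forall p, O p ->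
      partial1 u p (u1 p) /\ partial2 u p (u2 p) /\
      partial1 u1 p (u11 p) /\ partial2 u1 p (u12 p) /\
      partial1 u2 p (u21 p) /\ partial2 u2 p (u22 p) /\
      cont2_at u p /\ cont2_at u1 p /\ cont2_at u2 p /\
      cont2_at u11 p /\ cont2_at u12 p /\ cont2_at u21 p /\ cont2_at u22 p.

Definition Phi (kappa s : R) : R := s - sqrt (kappa ^ 2 - 1 + s ^ 2).

Definition nu (ux uy : R2 -> R) (t : R2) : R3 :=
  scal3 (/ sqrt (1 + ux t ^ 2 + uy t ^ 2)) (v3 (- ux t) (- uy t) 1).

Definition lam (n : R) (ux uy : R2 -> R) (t : R2) : R :=
  Phi n (dot3 e3 (nu ux uy t)).

Definition mvec (n : R) (ux uy : R2 -> R) (t : R2) : R3 :=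
  scal3 (/ n) (sub3 e3 (scal3 (lam n ux uy t) (nu ux uy t))).

Definition graphpt (u : R2 -> R) (t : R2) : R3 := v3 (fst t) (snd t) (u t).

Definition dist_c (n C : R) (w : R3) (u ux uy : R2 -> R) (t : R2) : R :=
  (C - dot3 (sub3 e3 w) (graphpt u t)) / (n - dot3 w (mvec n ux uy t)).

Definition fmap (n C : R) (w : R3) (u ux uy : R2 -> R) (t : R2) : R3 :=
  add3 (graphpt u t) (scal3 (dist_c n C w u ux uy t) (mvec n ux uy t)).

(** If the two refracted points agree, then [d_r m_r = d_b m_b], i.e.
    [(d_r/n_r) (e - λ_r ν) = (d_b/n_b) (e - λ_b ν)].  Were [ν] not vertical,
    its horizontal part would force [(d_r/n_r) λ_r = (d_b/n_b) λ_b], the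
    vertical part then [d_r/n_r = d_b/n_b], hence [λ_r = λ_b]; but [Φ_κ(s)]
    is strictly decreasing in [κ], so [λ_b < λ_r]. *)

From Stdlib Require Import Reals Lra Psatz.
Open Scope R_scope.

Lemma R3_ext (v w : R3) :
  x3 v = x3 w -> y3 v = y3 w -> z3 v = z3 w -> v = w.
Proof.
  destruct v as [[? ?] ?], w as [[? ?] ?]; unfold x3, y3, z3; simpl.
  intros -> -> ->; reflexivity.
Qed.

Lemma add3_cancel_l (p v w : R3) : add3 p v = add3 p w -> v = w.
Proof.
  intros E; apply R3_ext;
    [ apply (f_equal x3) in E | apply (f_equal y3) in E | apply (f_equal z3) in E ];
    cbn in E; lra.
Qed.

Lemma scal3_scal3 (a b : R) (v : R3) : scal3 a (scal3 b v) = scal3 (a * b) v.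
Proof. apply R3_ext; cbn; ring. Qed.

Lemma Phi_lt_kappa (k1 k2 s : R) : 1 <= k1 -> k1 < k2 -> Phi k2 s < Phi k1 s.
Proof.
  intros Hk1 Hk12; unfold Phi.
  assert (sqrt (k1 ^ 2 - 1 + s ^ 2) < sqrt (k2 ^ 2 - 1 + s ^ 2)) by (apply sqrt_lt_1; nra).
  lra.
Qed.

Lemma scal3_sub_e3_eq_horizontal (a b l l' : R) (v : R3) :
  a <> 0 -> l <> l' ->
  scal3 a (sub3 e3 (scal3 l v)) = scal3 b (sub3 e3 (scal3 l' v)) ->
  x3 v = 0 /\ y3 v = 0.
Proof.
  destruct v as [[vx vy] vz]; intros Ha Hl E.
  unfold scal3, sub3, e3, v3, x3, y3, z3 in *; simpl in *.
  injection E as Ex Ey Ez.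
  assert (horizontal_zero : forall c, a * (0 - l * c) = b * (0 - l' * c) -> c = 0).
  { intros c Ec.
    destruct (Req_dec c 0) as [| Hc]; [assumption | exfalso].
    assert (Ell : a * l = b * l') by (apply (Rmult_eq_reg_r c); [lra | assumption]).
    assert (Ellz : a * l * vz = b * l' * vz) by (rewrite Ell; reflexivity).
    assert (Eab : a = b) by lra.
    subst b; apply Hl, (Rmult_eq_reg_l a); assumption. }
  split; apply horizontal_zero; assumption.
Qed.

Lemma nu_eq_e3 (ux uy : R2 -> R) (t : R2) :
  x3 (nu ux uy t) = 0 -> y3 (nu ux uy t) = 0 -> nu ux uy t = e3.
Proof.
  unfold nu.
  assert (Hk : 0 < / sqrt (1 + ux t ^ 2 + uy t ^ 2))
    by (apply Rinv_0_lt_compat, sqrt_lt_R0; nra).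
  set (k := / sqrt (1 + ux t ^ 2 + uy t ^ 2)) in *.
  unfold scal3, e3, v3, x3, y3, z3; simpl.
  intros Hx Hy.
  assert (Hux : ux t = 0) by nra; assert (Huy : uy t = 0) by nra.
  assert (Hk1 : k = 1).
  { unfold k; rewrite Hux, Huy.
    replace (1 + 0 ^ 2 + 0 ^ 2) with 1 by ring.
    rewrite sqrt_1; apply Rinv_1. }
  rewrite Hk1, Hux, Huy; f_equal; [f_equal |]; ring.
Qed.

Theorem lemma3p2
  (Omega : R2 -> Prop) (u ux uy : R2 -> R) (n_r n_b C_r C_b : R) (w : R3) :
  open2 Omega ->
  C2_on Omega u ->
  (forall p, Omega p -> partial1 u p (ux p) /\ partial2 u p (uy p)) ->
  1 < n_r -> n_r < n_b ->
  dot3 w w = 1 ->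
  (forall t, Omega t -> 0 < dist_c n_r C_r w u ux uy t) ->
  (forall t, Omega t -> 0 < dist_c n_b C_b w u ux uy t) ->
  forall t, Omega t ->
    fmap n_r C_r w u ux uy t = fmap n_b C_b w u ux uy t ->
    nu ux uy t = e3.
Proof.
  intros _ _ _ Hr Hrb _ Hdr _ t Ht Heq.
  unfold fmap, mvec in Heq.
  apply add3_cancel_l in Heq; rewrite !scal3_scal3 in Heq.
  assert (Hlam : lam n_b ux uy t < lam n_r ux uy t) by (apply Phi_lt_kappa; lra).
  assert (Ha : 0 < dist_c n_r C_r w u ux uy t * / n_r)
    by (apply Rmult_lt_0_compat; [apply Hdr, Ht | apply Rinv_0_lt_compat; lra]).
  apply scal3_sub_e3_eq_horizontal in Heq as [Hx Hy]; [| lra | lra].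
  apply nu_eq_e3; assumption.
Qed.
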